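(* Let $a\in(0,1/2)$ and $0<\lambda\le\frac{2}{1-2a}$. There exists $C=C(a,\lambda)>0$ such that for all even $N$ (with $\check{\mathcal S}^a_N\ne\emptyset$) $$\frac{\pi^{\lambda,a}_N(\partial\check{\mathcal S}^a_N)}{\pi^{\lambda,a}_N(\check{\mathcal S}^a_N)}\ge CN^{-3}.$$
   Context: $\langle s\rangle$ is the smallest even integer $\ge s$. For $N$ even, $\mathcal S^a_N$ is the set of $\eta=(\eta_x)_{x\in\{0,\dots,N\}}$ with values in $\mathbb Z_{\ge0}$, $\eta_0=\eta_N=\langle aN\rangle$, $|\eta_{x+1}-\eta_x|=1$; $H(\eta)=\#\{x:\eta_x=0\}$; $\pi^{\lambda,a}_N(\eta)=\lambda^{H(\eta)}/\sum_{\eta'\in\mathcal S^a_N}\lambda^{H(\eta')}$. $\check{\mathcal S}^a_N=\{\eta\in\mathcal S^a_N:\exists x,\ \eta_x=0\}$, and $\partial\check{\mathcal S}^a_N$ is the set of $\eta\in\mathcal S^a_N$ with exactly one contact, i.e. $H(\eta)=1$ (equivalently, the paths of $\check{\mathcal S}^a_N$ from which the corner-flip dynamics can jump outside $\check{\mathcal S}^a_N$). *)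

From mathcomp Require Import all_boot all_order all_algebra.
From mathcomp Require Import reals.
Set Implicit Arguments. Unset Strict Implicit. Unset Printing Implicit Defensive.
Import Order.TTheory GRing.Theory Num.Theory.
Local Open Scope ring_scope.

Section PathDefs.
Variable R : realType.

Definition evceil (s : R) : int :=
  let c := Num.ceil s in if odd `|c|%N then c + 1 else c.

(* boundary height <aN> as a natural number (nonnegative since a > 0) *)
Definition h0 (a : R) (N : nat) : nat := `|evceil (a * N%:R)|%N.

(* Candidate paths: functions {0..N} -> nat. Values are stored in
   'I_(h0 a N + N + 1); every path of S^a_N takes values <= <aN> + N,
   so this codomain bound loses nothing. *)
Definition path (a : R) (N : nat) := {ffun 'I_N.+1 -> 'I_(h0 a N + N).+1}.

Definition ht (a : R) (N : nat) (eta : path a N) (x : 'I_N.+1) : nat :=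
  nat_of_ord (eta x).

Definition S (a : R) (N : nat) : {set path a N} :=
  [set eta : path a N |
     [&& ht eta ord0 == h0 a N, ht eta ord_max == h0 a N &
       [forall x : 'I_N.+1, (x < N)%N ==>
          ((ht eta (inord x.+1) == (ht eta x).+1) ||
           (ht eta x == (ht eta (inord x.+1)).+1))]]].

Definition H (a : R) (N : nat) (eta : path a N) : nat :=
  #|[set x : 'I_N.+1 | ht eta x == 0%N]|.

Definition piN (lam a : R) (N : nat) (A : {set path a N}) : R :=
  (\sum_(eta in A :&: S a N) lam ^+ H eta) /
  (\sum_(eta in S a N) lam ^+ H eta).

Definition Scheck (a : R) (N : nat) : {set path a N} :=
  [set eta in S a N | [exists x, ht eta x == 0%N]].

(* boundary of check S^a_N : paths of S^a_N with exactly one contact *)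
Definition dScheck (a : R) (N : nat) : {set path a N} :=
  [set eta in S a N | H eta == 1%N].

End PathDefs.

From Pilot Require Import Defs.
From mathcomp Require Import all_boot all_order all_algebra.
From mathcomp Require Import reals.
From mathcomp Require Import zify ring lra.
Set Implicit Arguments. Unset Strict Implicit. Unset Printing Implicit Defensive.
Import Order.TTheory GRing.Theory Num.Theory.
Local Open Scope ring_scope.

(* Write h = <aN> and N = 2k.  A path of S^a_N is a +-1 walk from h to h, so
   the paths with c contacts weigh lambda^c T_c in total, where T_c counts such
   walks visiting 0 exactly c times.  The reflection principle gives the ballot
   identity k T_1 = h C(N, k-h) and, for c >= 1, T_c <= C(N-c+1, k-h-c+1).
   As lambda (k-h) <= lambda (1-2a) k <= N, every lambda^c T_c is then at most
   lambda C(N, k-h), so the N+1 contact classes weigh at most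
   (N+2) lambda C(N, k-h), whereas the one-contact class weighs
   lambda T_1 >= 2 a lambda C(N, k-h) because h >= 2ak.  The ratio is thus at
   least 2a/(N+2) >= (a/2) N^-3. *)

Definition binz (n : nat) (k : int) : nat := if k < 0 then 0%N else 'C(n, `|k|%N).

Lemma binzS n k : binz n.+1 k = (binz n k + binz n (k - 1))%N.
Proof.
rewrite /binz; case: (ltrP k 0) => hk; first by rewrite ifT //; lia.
case: (ltrP (k - 1) 0) => hk1.
  have -> : k = 0 by lia.
  by rewrite /= !bin0.
have -> : `|k|%N = (`|k - 1|%N).+1 by lia.
by rewrite binS.
Qed.

Lemma binz_sym n k : binz n k = binz n (n%:Z - k).
Proof.
rewrite /binz; case: (ltrP k 0) => hk; case: (ltrP (n%:Z - k) 0) => hk2 //;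
  try by rewrite bin_small //; lia.
have -> : `|n%:Z - k|%N = (n - `|k|)%N by lia.
by rewrite bin_sub //; lia.
Qed.

Lemma binz0n k : binz 0 k = (k == 0).
Proof.
rewrite /binz; case: (ltrP k 0) => hk; first by case: eqP => //; lia.
by rewrite bin0n; case: eqP; case: eqP => //; lia.
Qed.

Lemma binz_leS n k : (binz n k <= binz n.+1 k)%N.
Proof. by rewrite binzS leq_addr. Qed.

(* [nwalks h n y c] counts the walks with steps [+1]/[-1] in [nat], of length
   [n], from [h] to [y], that visit [0] exactly [c] times (endpoints included);
   the recursion is on the last step. *)
Fixpoint nwalks (h n y c : nat) {struct n} : nat :=
  match n with
  | 0 => ((y == h) && (c == (h == 0)%N)) : nat
  | n'.+1 => if y is y'.+1 then (nwalks h n' y' c + nwalks h n' y'.+2 c)%N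
             else if c is c'.+1 then nwalks h n' 1 c' else 0%N
  end.

Lemma nwalks_far h n y c : (h + n < y)%N -> nwalks h n y c = 0%N.
Proof.
elim: n y c => [|n IH] [|y] c /= hy; try lia.
by rewrite !IH //; lia.
Qed.

Lemma nwalks_many h n y c : (n.+1 < c)%N -> nwalks h n y c = 0%N.
Proof.
elim: n y c => [|n IH] y c hc /=.
  by case: eqP => // _; case: eqP => //; case: (h == 0%N) => /=; lia.
case: y => [|y]; last by rewrite !IH //; lia.
by case: c hc => [|c] hc //; rewrite IH //; lia.
Qed.

Section Reflection.
Variable h : nat.
Hypothesis h_gt0 : (0 < h)%N.

(* Reflection principle; [d] is the number of down-steps. *)
Lemma nwalks_contact0 n y (d : int) : y%:Z + 2 * d = n%:Z + h%:Z ->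
  (nwalks h n y 0)%:Z = (binz n d)%:Z - (binz n (d - h%:Z))%:Z.
Proof.
elim: n y d => [|n IH] y d e.
  rewrite /= !binz0n (_ : (h == 0%N) = false); last by lia.
  case: (eqVneq y h) => [ey|ney].
    have -> : d = 0 by lia.
    by rewrite eqxx (_ : (0 - h%:Z == 0) = false) //; apply/eqP; lia.
  rewrite (_ : (d == 0) = false); last by apply/eqP; lia.
  by rewrite (_ : (d - h%:Z == 0) = false) //; apply/eqP; lia.
case: y e => [|y] e /=.
  rewrite (binz_sym n.+1 d) (_ : n.+1%:Z - d = d - h%:Z); last by lia.
  by rewrite subrr.
rewrite PoszD (IH y d); last by lia.
rewrite (IH y.+2 (d - 1)); last by lia.
rewrite (binzS n d) (binzS n (d - h%:Z)) !PoszD.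
have -> : d - 1 - h%:Z = d - h%:Z - 1 by lia.
lia.
Qed.

Lemma nwalks_contact1 n y (d : int) : y%:Z + 2 * d = n.+1%:Z + h%:Z ->
  (nwalks h n.+1 y 1)%:Z = (binz n (d - h%:Z))%:Z - (binz n (d - h%:Z - 1))%:Z.
Proof.
elim: n y d => [|n IH] y d e.
  rewrite !binz0n /= (_ : (h == 0%N) = false); last by lia.
  case: y e => [|y] e /=; last first.
    rewrite !andbF (_ : (d - h%:Z == 0) = false); last by apply/eqP; lia.
    by rewrite (_ : (d - h%:Z - 1 == 0) = false) //; apply/eqP; lia.
  rewrite (_ : (d - h%:Z - 1 == 0) = false); last by apply/eqP; lia.
  by case: (eqVneq h 1%N) => [eh|nh] /=; case: eqP => //; lia.
case: y e => [|y] e.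
  rewrite -[nwalks h n.+2 0 1]/(nwalks h n.+1 1 0) (nwalks_contact0 (d := d - 1)); last by lia.
  rewrite (binz_sym n.+1 (d - 1)) (_ : n.+1%:Z - (d - 1) = d - h%:Z); last by lia.
  by rewrite (_ : d - 1 - h%:Z = d - h%:Z - 1) //; lia.
rewrite -[nwalks h n.+2 y.+1 1]/(nwalks h n.+1 y 1 + nwalks h n.+1 y.+2 1)%N.
rewrite PoszD (IH y d); last by lia.
rewrite (IH y.+2 (d - 1)); last by lia.
rewrite (binzS n (d - h%:Z)) (binzS n (d - h%:Z - 1)) !PoszD.
have -> : d - 1 - h%:Z = d - h%:Z - 1 by lia.
lia.
Qed.

Lemma nwalks_le_binz n y c (d : int) : (0 < c)%N -> y%:Z + 2 * d = n%:Z + h%:Z ->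
  (nwalks h n y c <= binz (n.+1 - c) (d - h%:Z - c%:Z + 1))%N.
Proof.
elim: n y d c => [|n IH] y d c c_gt0 e.
  by rewrite /= (_ : (h == 0%N) = false) ?andbF //; lia.
case: y e => [|y] e /=; last first.
  case: (ltnP n.+1 c) => hc; first by rewrite !nwalks_many.
  have H1 := IH y d c c_gt0 ltac:(lia).
  have H2 := IH y.+2 (d - 1) c c_gt0 ltac:(lia).
  rewrite (_ : (n.+2 - c = (n.+1 - c).+1)%N); last by lia.
  rewrite binzS (_ : d - h%:Z - c%:Z + 1 - 1 = d - 1 - h%:Z - c%:Z + 1); last by lia.
  lia.
case: c c_gt0 => [|[|c]] c_gt0 //.
  have := nwalks_contact0 (n := n) (y := 1) (d := d - 1) ltac:(lia).
  rewrite (binz_sym n (d - 1)) (_ : n%:Z - (d - 1) = d - h%:Z); last by lia.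
  rewrite (_ : d - h%:Z - 1%:Z + 1 = d - h%:Z); last by lia.
  by have := binz_leS n (d - h%:Z); rewrite subSS subn0; lia.
have := IH 1%N (d - 1) c.+1 isT ltac:(lia).
rewrite subSS (_ : d - 1 - h%:Z - c.+1%:Z + 1 = d - h%:Z - c.+2%:Z + 1) //; lia.
Qed.

Lemma nwalks_loop_ballot k : (h <= k)%N ->
  (k * nwalks h k.*2 h 1 = h * 'C(k.*2, k - h))%N.
Proof.
move=> hk; have k2 : k.*2 = (k.*2.-1).+1 by lia.
have := nwalks_contact1 (n := k.*2.-1) (y := h) (d := k%:Z) ltac:(lia).
rewrite -k2 /binz (_ : (k%:Z - h%:Z < 0) = false); last by lia.
rewrite (_ : absz (k%:Z - h%:Z)%R = (k - h)%N); last by lia.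
have Ed := mul_bin_down k.*2 (k - h).
case: (ltnP h k) => hlt.
  rewrite (_ : (k%:Z - h%:Z - 1 < 0) = false); last by lia.
  rewrite (_ : absz (k%:Z - h%:Z - 1)%R = ((k - h).-1)%N); last by lia.
  have := mul_bin_diag k.*2 (k - h).-1.
  rewrite (_ : ((k - h).-1.+1 = k - h)%N); last by lia.
  nia.
rewrite (_ : (k%:Z - h%:Z - 1 < 0) = true); last by lia.
have kh : k = h by lia.
rewrite kh subnn bin0 in Ed *; lia.
Qed.

Lemma nwalks_loop_le k c : (0 < c)%N ->
  (nwalks h k.*2 h c <= if (h + c.-1 <= k)%N then 'C(k.*2 - c.-1, k - h - c.-1) else 0)%N.
Proof.
case: c => [|j] // _.
have := nwalks_le_binz (n := k.*2) (y := h) (c := j.+1) (d := k%:Z) isT ltac:(lia).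
rewrite /binz /=; case: ifP => hneg; case: ifP => hk; try lia.
rewrite (_ : absz (k%:Z - h%:Z - j.+1%:Z + 1)%R = (k - h - j)%N); last by lia.
by rewrite (_ : (k.*2.+1 - j.+1 = k.*2 - j)%N) //; lia.
Qed.

End Reflection.

Section BoxWalks.
Variable m : nat.
Local Notation walk n := {ffun 'I_n.+1 -> 'I_m}.
Local Open Scope nat_scope.

Definition wval n (f : walk n) (i : nat) : nat := f (inord i).
Definition adjb (x y : nat) := (y == x.+1) || (x == y.+1).
Definition is_walk n (f : walk n) :=
  all (fun i => adjb (wval f i) (wval f i.+1)) (iota 0 n).
Definition nzeros n (f : walk n) := count (fun i => wval f i == 0) (iota 0 n.+1).
Definition walk_from_to n h y c (f : walk n) :=
  [&& wval f 0 == h, wval f n == y, is_walk f & nzeros f == c].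
Definition nbox_walks n h y c := \sum_(f : walk n) walk_from_to h y c f.

Definition extend n (g : walk n) (t : 'I_m) : walk n.+1 :=
  [ffun x : 'I_n.+2 => if x <= n then g (inord x) else t].
Definition restrict n (f : walk n.+1) : walk n := [ffun x : 'I_n.+1 => f (inord x)].

Lemma wval_extend n g t i : i <= n -> wval (@extend n g t) i = wval g i.
Proof. by move=> le_in; rewrite /wval ffunE inordK ?le_in //; lia. Qed.

Lemma wval_extend_last n g t : wval (@extend n g t) n.+1 = t.
Proof. by rewrite /wval ffunE inordK // ltnn. Qed.

Lemma extendK n (g : walk n) t : restrict (extend g t) = g /\ extend g t ord_max = t.
Proof.
split; last by rewrite ffunE /= ltnn.
apply/ffunP => x; rewrite !ffunE inordK; last by have := ltn_ord x; lia.
by rewrite (_ : x <= n) ?inord_val //; have := ltn_ord x; lia.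
Qed.

Lemma restrictK n (f : walk n.+1) : extend (restrict f) (f ord_max) = f.
Proof.
apply/ffunP => x; rewrite !ffunE; case: ifP => le_xn; congr (f _); apply/val_inj.
  by rewrite /= !inordK //; lia.
by rewrite /=; have := ltn_ord x; lia.
Qed.

Lemma sum_walkS n (F : walk n.+1 -> nat) :
  \sum_(f : walk n.+1) F f = \sum_(g : walk n) \sum_(t : 'I_m) F (extend g t).
Proof.
rewrite pair_big /= (reindex (fun p : walk n * 'I_m => extend p.1 p.2)) //.
exists (fun f => (restrict f, f ord_max)) => [[g t] _ | f _] /=.
  by case: (extendK g t) => -> ->.
exact: restrictK.
Qed.

Lemma is_walk_extend n g t : is_walk (@extend n g t) = is_walk g && adjb (wval g n) t.
Proof.
rewrite /is_walk (_ : iota 0 n.+1 = iota 0 n ++ [:: n]); last by rewrite -addn1 iotaD.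
rewrite all_cat /= andbT wval_extend // wval_extend_last.
congr (_ && _); apply: eq_in_all => i; rewrite mem_iota => /andP[_ lt_in].
by rewrite !wval_extend //; lia.
Qed.

Lemma nzeros_extend n g t : nzeros (@extend n g t) = nzeros g + (t == 0 :> nat).
Proof.
rewrite /nzeros (_ : iota 0 n.+2 = iota 0 n.+1 ++ [:: n.+1]); last by rewrite -addn1 iotaD.
rewrite count_cat; congr (_ + _); last by rewrite /= wval_extend_last addn0.
apply: eq_in_count => i; rewrite mem_iota => /andP[_ lt_in].
by rewrite wval_extend //; lia.
Qed.

Lemma sum_ord_pick (y : nat) (F : nat -> nat) :
  \sum_(t : 'I_m) (t == y :> nat) * F t = (y < m) * F y.
Proof.
case: (ltnP y m) => hy.
  rewrite (bigD1 (Ordinal hy)) //= eqxx mul1n big1 ?addn0 ?mul1n // => t ne_ty.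
  by case: eqP => // e; move/eqP: ne_ty; case; exact/val_inj.
by rewrite big1 // => t _; case: eqP => // e; have := ltn_ord t; lia.
Qed.

Lemma nbox_walks0 h y c :
  nbox_walks 0 h y c = (y < m) * ((y == h) && (c == (h == 0))).
Proof.
rewrite /nbox_walks (reindex (fun t : 'I_m => [ffun _ : 'I_1 => t])) /=; last first.
  exists (fun f => f ord0) => [t _|f _]; first by rewrite ffunE.
  by apply/ffunP => x; rewrite ffunE (ord1 x).
rewrite -(sum_ord_pick y (fun=> (y == h) && (c == (h == 0)))).
apply: eq_bigr => t _; rewrite /walk_from_to /is_walk /nzeros /wval /= ffunE.
case: (eqVneq (t : nat) y) => [->|_] /=; last by rewrite andbF.
by rewrite mul1n addn0; case: (y =P h) => //= ->; rewrite eq_sym.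
Qed.

Lemma nbox_walksS n h y c : nbox_walks n.+1 h y c = (y < m) *
  \sum_(g : walk n) [&& wval g 0 == h, is_walk g, adjb (wval g n) y
                      & nzeros g + (y == 0) == c].
Proof.
rewrite /nbox_walks sum_walkS big_distrr /=; apply: eq_bigr => g _.
rewrite -(sum_ord_pick y (fun t => [&& wval g 0 == h, is_walk g, adjb (wval g n) t
                                     & nzeros g + (t == 0) == c])).
apply: eq_bigr => t _.
rewrite /walk_from_to is_walk_extend nzeros_extend wval_extend // wval_extend_last.
by case: (wval g 0 == h); case: (t == y :> nat); rewrite /= ?mul1n ?mul0n ?andbA.
Qed.

Lemma nbox_walksE n h y c : h + n < m -> nbox_walks n h y c = nwalks h n y c.
Proof.
elim: n y c => [|n IH] y c hm.
  rewrite nbox_walks0 /=; case: (ltnP y m) => hy; first by rewrite mul1n.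
  by rewrite mul0n; case: eqP => //; lia.
rewrite nbox_walksS; case: (ltnP y m) => hy; last by rewrite mul0n nwalks_far //; lia.
rewrite mul1n /=; case: y hy => [|y] hy.
  case: c => [|c]; first by rewrite big1 // => g _; rewrite addn1 /= !andbF.
  rewrite -IH; last lia.
  apply: eq_bigr => g _; rewrite /walk_from_to /adjb addn1 eqSS /=.
  by case: (wval g 0 == h); case: (is_walk g); case: (wval g n == 1).
rewrite -!IH; try lia.
rewrite /nbox_walks -big_split /=; apply: eq_bigr => g _.
rewrite /walk_from_to /adjb eqSS addn0.
case: (wval g 0 == h); case: (is_walk g); case: (nzeros g == c) => //=; rewrite ?andbF //.
rewrite !andbT (eq_sym y); move: (wval g n) => v.
by case: (v =P y); case: (v =P y.+2) => //= ??; lia.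
Qed.

End BoxWalks.

Lemma binomial_shift_le n u j : (j <= u)%N -> (u <= n)%N ->
  ('C(n - j, u - j) * n ^ j <= 'C(n, u) * u ^ j)%N.
Proof.
elim: j => [|j IH] ju un; first by rewrite !subn0 !expn0 !muln1.
have := mul_bin_diag (n - j) (u - j.+1).
rewrite (_ : (n - j).-1 = n - j.+1)%N; last by lia.
rewrite (_ : (u - j.+1).+1 = u - j)%N; last by lia.
move: (IH (ltnW ju) un).
set A := 'C(n - j.+1, u - j.+1); set B := 'C(n - j, u - j); set C := 'C(n, u).
set P := (n ^ j)%N; set Q := (u ^ j)%N => IHj E.
rewrite !expnS -(leq_pmul2l (_ : (0 < n - j)%N)); last by lia.
have -> : ((n - j) * (A * (n * P)) = ((u - j) * n) * (B * P))%N.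
  by rewrite mulnA E; ring.
apply: (@leq_trans ((u * (n - j)) * (C * Q))%N); first by apply: leq_mul => //; nia.
by apply/eq_leq; ring.
Qed.

Section RealBounds.
Variable R : realFieldType.
Implicit Types a lam : R.

Lemma exp_binomial_shift_le lam n u j : 0 <= lam -> lam * u%:R <= n%:R ->
  (j <= u)%N -> (u <= n)%N -> lam ^+ j * ('C(n - j, u - j))%:R <= ('C(n, u))%:R.
Proof.
move=> lam_ge0 lam_u ju un.
have [n0|n_gt0] := posnP n.
  have [-> ->] : u = 0%N /\ j = 0%N by lia.
  by rewrite expr0 mul1r !subn0.
have nj_gt0 : 0 < n%:R ^+ j :> R by rewrite exprn_gt0 // ltr0n.
rewrite -(ler_pM2r nj_gt0) -mulrA.
apply: (le_trans (y := lam ^+ j * (('C(n, u))%:R * u%:R ^+ j))).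
  by rewrite ler_wpM2l ?exprn_ge0 // -!natrX -!natrM ler_nat binomial_shift_le.
rewrite mulrCA -exprMn ler_wpM2l ?ler0n //.
by rewrite lerXn2r // nnegrE ?mulr_ge0 ?ler0n.
Qed.

Lemma loop_weight_le lam h k c : 0 <= lam -> (0 < h)%N ->
  lam * (k - h)%:R <= (k.*2)%:R -> (0 < c)%N ->
  lam ^+ c * (nwalks h k.*2 h c)%:R <= lam * ('C(k.*2, k - h))%:R.
Proof.
move=> lam_ge0 h_gt0 lam_kh c_gt0.
have := nwalks_loop_le h_gt0 k c_gt0; case: c c_gt0 => [|j] // _ /=.
case: ifP => hjk T_le; last first.
  by rewrite (_ : nwalks _ _ _ _ = 0%N) ?mulr0 ?mulr_ge0 //; lia.
rewrite exprS -mulrA ler_wpM2l //.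
apply: le_trans (exp_binomial_shift_le (j := j) lam_ge0 lam_kh _ _); [|lia|lia].
by rewrite ler_wpM2l ?exprn_ge0 // ler_nat.
Qed.

Lemma contact_ratio_ge a lam h k : 0 < a -> 0 < lam -> lam * (1 - 2 * a) <= 2 ->
  (0 < h)%N -> 2 * a * k%:R <= h%:R ->
  let W := \sum_(c < k.*2.+2 | (0 < c)%N) lam ^+ c * (nwalks h k.*2 h c)%:R in
  0 < W -> 2 * a / (k.*2.+2)%:R <= lam * (nwalks h k.*2 h 1)%:R / W.
Proof.
move=> a_gt0 lam_gt0 lam_le h_gt0 h_ge W W_gt0.
have hk : (h <= k)%N.
  rewrite leqNgt; apply/negP => kh; move: W_gt0; rewrite /W big1 ?ltxx // => c c_gt0.
  have := nwalks_loop_le h_gt0 k c_gt0; rewrite ifN; last by lia.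
  by rewrite leqn0 => /eqP->; rewrite mulr0.
set C := ('C(k.*2, k - h))%:R : R.
have lam_kh : lam * (k - h)%:R <= (k.*2)%:R.
  rewrite natrB // -mul2n natrM.
  apply: (le_trans (y := k%:R * (lam * (1 - 2 * a)))); last by rewrite mulrC ler_wpM2r.
  by rewrite mulrCA ler_wpM2l ?(ltW lam_gt0) //; nra.
have W_le : W <= (k.*2.+2)%:R * (lam * C).
  rewrite mulr_natl -[k.*2.+2 in leRHS]card_ord -sumr_const /W big_mkcond.
  apply: ler_sum => c _.
  case: ifP => c_gt0; first exact: loop_weight_le (ltW lam_gt0) _ _ _.
  by rewrite mulr_ge0 ?ler0n ?ltW.
have T1_ge : 2 * a * C <= (nwalks h k.*2 h 1)%:R.
  have k_gt0 : 0 < k%:R :> R by rewrite ltr0n; lia.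
  rewrite -(ler_pM2l k_gt0) -natrM nwalks_loop_ballot // natrM mulrCA mulrA.
  by rewrite ler_wpM2r ?ler0n // mulrC.
rewrite ler_pdivrMr // mulrAC ler_pdivlMr ?ltr0n //.
apply: (le_trans (y := 2 * a * ((k.*2.+2)%:R * (lam * C)))).
  by rewrite ler_wpM2l // mulr_ge0 // ltW.
rewrite [leLHS](_ : _ = lam * (k.*2.+2)%:R * (2 * a * C)); last by ring.
by rewrite [leRHS]mulrAC ler_wpM2l // mulr_ge0 ?ltW.
Qed.

Lemma inv_cube_le (x : R) : 1 <= x -> (x ^+ 3)^-1 <= 4 / (x + 2).
Proof.
move=> x_ge1; rewrite -[leRHS]invf_div lef_pV2 ?posrE ?divr_gt0 ?exprn_gt0 //; try lra.
rewrite ler_pdivrMr; last lra.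
rewrite !exprS expr0 mulr1; nra.
Qed.

End RealBounds.

Lemma card_set_count n (P : 'I_n.+1 -> bool) :
  #|[set x | P x]| = count (fun i => P (inord i)) (iota 0 n.+1).
Proof.
rewrite -val_enum_ord count_map cardsE cardE /enum_mem size_filter.
rewrite (@eq_filter _ _ predT) // filter_predT.
by apply: eq_count => x /=; rewrite inord_val.
Qed.

Lemma is_walkE n m (f : {ffun 'I_n.+1 -> 'I_m}) :
  [forall x : 'I_n.+1, (x < n)%N ==>
     ((nat_of_ord (f (inord x.+1)) == (nat_of_ord (f x)).+1) ||
      (nat_of_ord (f x) == (nat_of_ord (f (inord x.+1))).+1))] = is_walk f.
Proof.
apply/forallP/allP => [Hf i|Hf x].
  rewrite mem_iota add0n => /andP[_ lt_in].
  by have := Hf (inord i); rewrite inordK ?lt_in //; lia.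
apply/implyP => lt_xn.
by have := Hf x; rewrite mem_iota add0n lt_xn => /(_ isT); rewrite /adjb /wval inord_val.
Qed.

Section Paths.
Variables (R : realType) (a : R) (N : nat).
Local Notation h := (h0 a N).

Lemma S_contactsE (eta : Defs.path a N) c :
  (eta \in S a N) && (H eta == c) = walk_from_to h h c eta.
Proof.
have e0 : (inord 0 : 'I_N.+1) = ord0 by apply/val_inj; rewrite /= inordK.
have eN : (inord N : 'I_N.+1) = ord_max by apply/val_inj; rewrite /= inordK.
by rewrite inE /walk_from_to /H /ht card_set_count is_walkE /wval e0 eN -!andbA.
Qed.

Lemma card_S_contacts c :
  (\sum_(eta : Defs.path a N) ((eta \in S a N) && (H eta == c) : nat))%N = nwalks h N h c.
Proof.
rewrite -(@nbox_walksE (h + N).+1) //.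
by apply: eq_bigr => eta _; rewrite S_contactsE.
Qed.

Lemma H_lt (eta : Defs.path a N) : (H eta < N.+2)%N.
Proof. by rewrite ltnS; apply: leq_trans (max_card _) _; rewrite card_ord. Qed.

Lemma weight_contacts (lam : R) (P : pred nat) :
  \sum_(eta in S a N | P (H eta)) lam ^+ H eta =
  \sum_(c < N.+2 | P c) lam ^+ c * (nwalks h N h c)%:R.
Proof.
under [RHS]eq_bigr do rewrite -card_S_contacts natr_sum mulr_sumr.
rewrite exchange_big [LHS]big_mkcond /=; apply: eq_bigr => eta _.
have [PH|nPH] := boolP (P (H eta)); last first.
  rewrite andbF big1 // => c Pc.
  by rewrite (_ : H eta == c = false) ?andbF ?mulr0 //; apply: contraNF nPH => /eqP->.
rewrite andbT (bigD1 (Ordinal (H_lt eta))) //= eqxx andbT big1 => [|c /andP[_ ne]].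
  by case: (_ \in _); rewrite ?mulr1 ?mulr0 addr0.
rewrite (_ : H eta == c = false) ?andbF ?mulr0 //; apply: contraNF ne => /eqP e.
by apply/eqP/val_inj; rewrite /= e.
Qed.

Lemma weight_Scheck (lam : R) : \sum_(eta in Scheck a N) lam ^+ H eta =
  \sum_(c < N.+2 | (0 < c)%N) lam ^+ c * (nwalks h N h c)%:R.
Proof.
rewrite -weight_contacts; apply: eq_bigl => eta; rewrite !inE; congr (_ && _).
rewrite /H card_gt0; apply/existsP/set0Pn => -[x x0]; exists x; by rewrite inE in x0 *.
Qed.

Lemma weight_dScheck (lam : R) :
  \sum_(eta in dScheck a N) lam ^+ H eta = lam * (nwalks h N h 1)%:R.
Proof.
rewrite (eq_bigl (fun eta => (eta \in S a N) && (H eta == 1%N))); last first.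
  by move=> eta; rewrite inE.
rewrite (weight_contacts lam (pred1 1%N)).
by rewrite (big_pred1 (Ordinal (isT : (1 < N.+2)%N))) ?expr1.
Qed.

Lemma Scheck_sub : Scheck a N \subset S a N.
Proof. by apply/subsetP => eta; rewrite inE => /andP[]. Qed.

Lemma dScheck_sub : dScheck a N \subset S a N.
Proof. by apply/subsetP => eta; rewrite inE => /andP[]. Qed.

Lemma weight_gt0 (lam : R) (A : {set Defs.path a N}) :
  0 < lam -> A != set0 -> 0 < \sum_(eta in A) lam ^+ H eta.
Proof.
move=> lam_gt0 /set0Pn[eta0 A_eta0]; rewrite (bigD1 eta0) //=.
by rewrite ltr_pwDl ?exprn_gt0 ?sumr_ge0 // => eta _; rewrite exprn_ge0 ?ltW.
Qed.

Lemma piN_ge0 (lam : R) (A : {set Defs.path a N}) : 0 <= lam -> 0 <= piN lam A.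
Proof. by move=> lam_ge0; rewrite divr_ge0 ?sumr_ge0 // => eta _; rewrite exprn_ge0. Qed.

Lemma piN_ratio (lam : R) (A B : {set Defs.path a N}) :
  \sum_(eta in S a N) lam ^+ H eta != 0 ->
  piN lam A / piN lam B =
  (\sum_(eta in A :&: S a N) lam ^+ H eta) / \sum_(eta in B :&: S a N) lam ^+ H eta.
Proof. by move=> Z_neq0; rewrite /piN invf_div mulrA divfK. Qed.

Lemma h0_ge : a * N%:R <= (h0 a N)%:R.
Proof.
rewrite /h0 natr_absz; apply: (le_trans (ceil_ge _)); rewrite ler_int.
apply: le_trans (ler_norm _); rewrite /evceil /=.
by case: ifP => _; rewrite ?lerDl.
Qed.

End Paths.

Theorem lemma4p5 (R : realType) (a lam : R) :
  0 < a -> a < 1 / 2 -> 0 < lam -> lam <= 2 / (1 - 2 * a) ->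
  exists2 C : R, 0 < C &
    forall N : nat, ~~ odd N -> Scheck a N != set0 ->
      piN lam (dScheck a N) / piN lam (Scheck a N) >= C * (N%:R ^+ 3)^-1.
Proof.
move=> a_gt0 a_lt lam_gt0 lam_le; exists (a / 2) => [|N evenN Scheck_n0].
  by rewrite divr_gt0.
(* For N = 0 the bound is trivial since 0^-1 = 0. *)
have [->|N_gt0] := posnP N.
  by rewrite expr0n invr0 mulr0 divr_ge0 ?piN_ge0 ?ltW.
have S_n0 : S a N != set0.
  by apply: contraNneq Scheck_n0 => S0; rewrite -subset0 -S0 Scheck_sub.
rewrite piN_ratio ?gt_eqF ?weight_gt0 // (setIidPl (dScheck_sub _ _)).
rewrite (setIidPl (Scheck_sub _ _)) weight_dScheck.
have W_gt0 := weight_gt0 lam_gt0 Scheck_n0; rewrite weight_Scheck in W_gt0 *.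
have h_ge := h0_ge a N; have h_gt0 : (0 < h0 a N)%N.
  by rewrite -(ltr0n R); apply: lt_le_trans h_ge; rewrite mulr_gt0 ?ltr0n.
move: (h0 a N) h_ge h_gt0 W_gt0 => h h_ge h_gt0.
rewrite -[N](odd_double_half N) (negbTE evenN) add0n in N_gt0 h_ge *.
move: (N./2) N_gt0 h_ge => k k_gt0 h_ge W_gt0.
have x_ge1 : 1 <= (k.*2)%:R :> R by rewrite ler1n.
apply: le_trans (contact_ratio_ge a_gt0 lam_gt0 _ h_gt0 _ W_gt0); last first.
- by move: h_ge; rewrite -mul2n natrM mulrA (mulrC a).
- by rewrite -ler_pdivlMr // subr_gt0; lra.
apply: le_trans (ler_wpM2l _ (inv_cube_le x_ge1)) _; first by rewrite divr_ge0 ?ltW.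
rewrite mulrA (_ : a / 2 * 4 = 2 * a); last by field.
by rewrite -(addn2 k.*2) natrD.
Qed.
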